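(* Let $W$ be a channel from $\{1,\dots,m\}$ to $\{1,\dots,n\}$. Let \[ \mathfrak{U}_+=\Big\{\mathrm{supp}((\alpha)_+):\alpha\in\mathbb{R}^{\mathcal{D}},\ \sum_D\alpha_DD=0,\ \sum_D\alpha_D\log_2\mathrm{rank}(D)>0\Big\}, \] \[ \mathfrak{U}_-=\Big\{\mathrm{supp}((\alpha)_-):\alpha\in\mathbb{R}^{\mathcal{D}},\ \sum_D\alpha_DD=0,\ \sum_D\alpha_D\log_2\mathrm{rank}(D)>0\Big\}. \] For $\lambda\in\Lambda(W)$: $C_{11}(\lambda)=\underline{C}_{11}(W)$ if and only if there is no $U\in\mathfrak{U}_+$ with $U\subseteq\mathrm{supp}(\lambda)$; and $C_{11}(\lambda)=\overline{C}_{11}(W)$ if and only if there is no $U\in\mathfrak{U}_-$ with $U\subseteq\mathrm{supp}(\lambda)$.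
   Context: A channel is a row-stochastic matrix; a deterministic channel from $\{1,\dots,m\}$ to $\{1,\dots,n\}$ is one with 0-1 entries; $\mathcal{D}$ is the set of them, $\mathrm{rank}(D)$ the matrix rank. $\Lambda(W)=\{\lambda\text{ probability distribution on }\mathcal{D}: W=\sum_D\lambda_DD\}$. $C_{11}(\lambda)=\sum_D\lambda_D\log_2\mathrm{rank}(D)$, $\underline{C}_{11}(W)=\inf_{\lambda\in\Lambda(W)}C_{11}(\lambda)$, $\overline{C}_{11}(W)=\sup_{\lambda\in\Lambda(W)}C_{11}(\lambda)$. For $\alpha\in\mathbb{R}^{\mathcal{D}}$, $(\alpha)_+=(\max(\alpha_D,0))_D$, $(\alpha)_-=(\min(\alpha_D,0))_D$, and $\mathrm{supp}(\alpha)=\{D:\alpha_D\neq0\}$. *)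

From HB Require Import structures.
From mathcomp Require Import all_boot all_order all_algebra.
From mathcomp Require Import all_classical all_reals exp.
Set Implicit Arguments. Unset Strict Implicit. Unset Printing Implicit Defensive.
Import Order.TTheory GRing.Theory Num.Theory.
Local Open Scope ring_scope.
Local Open Scope classical_set_scope.

Section Defs.
Variables (R : realType) (m n : nat).

(* deterministic channels {1..m} -> {1..n} are indexed by functions 'I_m -> 'I_n;
   detmx f is the 0-1 row-stochastic matrix with a 1 at (i, f i). *)
Definition detmx (f : {ffun 'I_m -> 'I_n}) : 'M[R]_(m, n) :=
  \matrix_(i, j) (f i == j)%:R.

Definition log2 (x : R) : R := ln x / ln 2.

Definition is_channel (W : 'M[R]_(m, n)) : Prop :=
  (forall i j, 0 <= W i j) /\ (forall i, \sum_j W i j = 1).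

Definition is_distribution (lam : {ffun {ffun 'I_m -> 'I_n} -> R}) : Prop :=
  (forall D, 0 <= lam D) /\ \sum_D lam D = 1.

Definition in_Lambda (W : 'M[R]_(m, n)) (lam : {ffun {ffun 'I_m -> 'I_n} -> R}) : Prop :=
  is_distribution lam /\ W = \sum_D lam D *: detmx D.

Definition C11 (lam : {ffun {ffun 'I_m -> 'I_n} -> R}) : R :=
  \sum_D lam D * log2 (\rank (detmx D))%:R.

Definition C11_values (W : 'M[R]_(m, n)) : set R :=
  [set x | exists lam, in_Lambda W lam /\ x = C11 lam].

Definition C11_lower (W : 'M[R]_(m, n)) : R := inf (C11_values W).
Definition C11_upper (W : 'M[R]_(m, n)) : R := sup (C11_values W).

Definition pos_part (a : {ffun {ffun 'I_m -> 'I_n} -> R}) : {ffun {ffun 'I_m -> 'I_n} -> R} :=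
  [ffun D => Num.max (a D) 0].
Definition neg_part (a : {ffun {ffun 'I_m -> 'I_n} -> R}) : {ffun {ffun 'I_m -> 'I_n} -> R} :=
  [ffun D => Num.min (a D) 0].

Definition supp (a : {ffun {ffun 'I_m -> 'I_n} -> R}) : {set {ffun 'I_m -> 'I_n}} :=
  [set D | a D != 0].

Definition admissible (alpha : {ffun {ffun 'I_m -> 'I_n} -> R}) : Prop :=
  \sum_D alpha D *: detmx D = 0 /\ 0 < \sum_D alpha D * log2 (\rank (detmx D))%:R.

Definition U_plus (U : {set {ffun 'I_m -> 'I_n}}) : Prop :=
  exists alpha, admissible alpha /\ U = supp (pos_part alpha).
Definition U_minus (U : {set {ffun 'I_m -> 'I_n}}) : Prop :=
  exists alpha, admissible alpha /\ U = supp (neg_part alpha).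

End Defs.

From HB Require Import structures.
From mathcomp Require Import all_boot all_order all_algebra.
From mathcomp Require Import all_classical all_reals exp.
Set Implicit Arguments. Unset Strict Implicit. Unset Printing Implicit Defensive.
Import Order.TTheory GRing.Theory Num.Theory.
Local Open Scope ring_scope.

(* Lambda(W) is the slice of the probability simplex on deterministic channels
   cut out by the linear constraint sum_D lam_D D = W, and C11 is linear, so lam
   is optimal iff no feasible direction improves C11.  Moving from lam to
   lam - eps alpha stays in Lambda(W) for small eps > 0 exactly when
   sum_D alpha_D D = 0 (which forces sum_D alpha_D = 0, as D is row-stochastic)
   and alpha is positive only where lam is; conversely, lam - mu is such a
   direction for every mu in Lambda(W) with smaller C11.  Maximising C11 is
   minimising -C11, which exchanges the roles of (alpha)_+ and (alpha)_-. *)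

Lemma inf_attainedP (R : realType) (E : set R) (x : R) :
  has_lbound E -> E x -> x = inf E <-> lbound E x.
Proof.
move=> lbE Ex; split=> [->|lbx]; first exact: ge_inf.
by apply/eqP; rewrite eq_le ge_inf // andbT lb_le_inf //; exists x.
Qed.

Lemma sup_attainedP (R : realType) (E : set R) (x : R) :
  has_ubound E -> E x -> x = sup E <-> ubound E x.
Proof.
move=> ubE Ex; split=> [->|ubx]; first exact: ub_le_sup.
by apply/eqP; rewrite eq_le ub_le_sup // ge_sup //; exists x.
Qed.

Section Mixtures.
Variables (R : realType) (m n : nat).
Local Notation DT := {ffun 'I_m -> 'I_n}.
Local Notation FT := {ffun DT -> R}.

Definition mixture (a : FT) : 'M[R]_(m, n) := \sum_D a D *: detmx R D.

Definition cost (c : DT -> R) (a : FT) : R := \sum_D a D * c D.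

Definition log2_rank (D : DT) : R := log2 (\rank (detmx R D))%:R.

Fact mixture_is_zmod_morphism : zmod_morphism mixture.
Proof.
by move=> a b; rewrite /mixture -sumrB; apply: eq_bigr => D _; rewrite !ffunE scalerBl.
Qed.
HB.instance Definition _ :=
  GRing.isZmodMorphism.Build FT 'M[R]_(m, n) mixture mixture_is_zmod_morphism.

Fact cost_is_zmod_morphism c : zmod_morphism (cost c).
Proof.
by move=> a b; rewrite /cost -sumrB; apply: eq_bigr => D _; rewrite !ffunE mulrBl.
Qed.
HB.instance Definition _ c :=
  GRing.isZmodMorphism.Build FT R (cost c) (cost_is_zmod_morphism c).

Lemma mixture_scale (k : R) (a : FT) :
  mixture [ffun D => k * a D] = k *: mixture a.
Proof.
by rewrite /mixture scaler_sumr; apply: eq_bigr => D _; rewrite ffunE scalerA.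
Qed.

Lemma cost_scale c (k : R) (a : FT) : cost c [ffun D => k * a D] = k * cost c a.
Proof. by rewrite /cost mulr_sumr; apply: eq_bigr => D _; rewrite ffunE mulrA. Qed.

Lemma cost_oppc c (a : FT) : cost (fun D => - c D) a = - cost c a.
Proof. by rewrite /cost -sumrN; apply: eq_bigr => D _; rewrite mulrN. Qed.

Lemma cost_dist_bound c (lam : FT) :
  is_distribution lam -> `|cost c lam| <= \sum_D `|c D|.
Proof.
move=> [lam_ge0 lam_sum1]; rewrite (le_trans (ler_norm_sum _ _ _)) //.
apply: ler_sum => D _; rewrite normrM ger0_norm // ler_piMl //.
by rewrite -lam_sum1 (bigD1 D) //= lerDl sumr_ge0.
Qed.

Lemma mixture_row_sum (a : FT) (i : 'I_m) : \sum_j mixture a i j = \sum_D a D.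
Proof.
under eq_bigr do rewrite summxE; rewrite exchange_big /=.
apply: eq_bigr => D _; rewrite (bigD1 (D i)) //= big1 => [|j /negbTE Dij].
  by rewrite !mxE eqxx mulr1 addr0.
by rewrite !mxE eq_sym Dij mulr0.
Qed.

Lemma admissible_sum0 (a : FT) : admissible a -> \sum_D a D = 0.
Proof.
move=> [mix0 C11_gt0]; have [m0|m_gt0] := posnP m.
  (* Without inputs every D has rank 0 and log2 0 = 0 (as ln 0 = 0), so no
     alpha is admissible. *)
  move: C11_gt0; rewrite big1 ?ltxx // => D _.
  have /eqP -> : \rank (detmx R D) == 0%N by rewrite -leqn0 -m0 rank_leq_row.
  by rewrite /log2 ln0 // mul0r mulr0.
rewrite -(mixture_row_sum a (Ordinal m_gt0)) [mixture a]mix0.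
by rewrite big1 // => j _; rewrite mxE.
Qed.

Lemma in_supp_pos_part (a : FT) D : (D \in supp (pos_part a)) = (0 < a D).
Proof. by rewrite inE ffunE; case: ltP => [/gt_eqF ->|]; rewrite ?eqxx. Qed.

Lemma supp_neg_part (a : FT) : supp (neg_part a) = supp (pos_part (- a)).
Proof.
apply/setP => D; rewrite in_supp_pos_part ffunE oppr_gt0 inE ffunE.
by case: ltP => [/lt_eqF ->|]; rewrite ?eqxx.
Qed.

Lemma in_supp_dist (lam : FT) :
  is_distribution lam -> forall D, (D \in supp lam) = (0 < lam D).
Proof. by move=> [lam_ge0 _] D; rewrite inE lt_def lam_ge0 andbT. Qed.

Lemma distribution_perturb (lam b : FT) :
  is_distribution lam -> \sum_D b D = 0 -> (forall D, 0 < b D -> 0 < lam D) ->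
  exists2 eps : R, 0 < eps & is_distribution (lam - [ffun D => eps * b D]).
Proof.
move=> [lam_ge0 lam_sum1] b_sum0 b_supp.
pose c := \sum_(D | 0 < b D) b D / lam D.
have ratio_le_c D : 0 < b D -> b D / lam D <= c.
  move=> bD_gt0; rewrite /c (bigD1 D) //= lerDl sumr_ge0 // => D' /andP[bD'_gt0 _].
  exact: divr_ge0 (ltW bD'_gt0) (lam_ge0 D').
have c1_gt0 : 0 < 1 + c.
  by rewrite ltr_pwDl // sumr_ge0 // => D bD_gt0; exact: divr_ge0 (ltW bD_gt0) (lam_ge0 D).
(* c bounds each ratio b_D / lam_D with b_D > 0, so eps := 1 / (1 + c) keeps
   lam - eps b nonnegative. *)
exists (1 + c)^-1; first by rewrite invr_gt0.
split; last first.
  under eq_bigr do rewrite !ffunE.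
  by rewrite sumrB -mulr_sumr b_sum0 mulr0 subr0.
move=> D; rewrite !ffunE subr_ge0 mulrC.
have [bD_gt0|bD_le0] := ltP 0 (b D); last first.
  by rewrite (le_trans _ (lam_ge0 D)) // pmulr_lle0 ?invr_gt0.
have lamD_gt0 := b_supp D bD_gt0.
rewrite ler_pdivrMr // -[b D](divfK (lt0r_neq0 lamD_gt0)) mulrC ler_pM2l //.
by rewrite (le_trans (ratio_le_c D bD_gt0)) // lerDr.
Qed.

Lemma C11_values_norm_le (W : 'M[R]_(m, n)) (x : R) :
  C11_values W x -> `|x| <= \sum_D `|log2_rank D|.
Proof. by move=> [mu [[mu_dist _] ->]]; exact: cost_dist_bound. Qed.

Definition descent_dir (c : DT -> R) (lam alpha : FT) : Prop :=
  [/\ mixture alpha = 0, \sum_D alpha D = 0, 0 < cost c alpha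
    & supp (pos_part alpha) \subset supp lam].

Section Optimality.
Variables (W : 'M[R]_(m, n)) (c : DT -> R) (lam : FT).
Hypothesis lam_in : in_Lambda W lam.

Lemma descent_dir_improves (alpha : FT) : descent_dir c lam alpha ->
  exists2 mu, in_Lambda W mu & cost c mu < cost c lam.
Proof.
case: lam_in => lam_dist W_lam [mix0 sum0 cost_gt0 supp_sub].
have alpha_supp D : 0 < alpha D -> 0 < lam D.
  by rewrite -in_supp_pos_part -(in_supp_dist lam_dist) => /(fintype.subsetP supp_sub).
have [eps eps_gt0 mu_dist] := distribution_perturb lam_dist sum0 alpha_supp.
exists (lam - [ffun D => eps * alpha D]).
  split=> //; change (W = mixture (lam - [ffun D => eps * alpha D])).
  by rewrite raddfB /= mixture_scale mix0 scaler0 subr0.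
by rewrite raddfB /= cost_scale ltrBlDr ltrDl mulr_gt0.
Qed.

Lemma improvement_descent_dir (mu : FT) : in_Lambda W mu ->
  cost c mu < cost c lam -> descent_dir c lam (lam - mu).
Proof.
case: lam_in => lam_dist W_lam [[mu_ge0 mu_sum1] W_mu] mu_lt; split.
- by rewrite raddfB /= /mixture -W_lam -W_mu subrr.
- under eq_bigr do rewrite !ffunE.
  by rewrite sumrB mu_sum1 lam_dist.2 subrr.
- by rewrite raddfB /= subr_gt0.
apply/fintype.subsetP => D; rewrite in_supp_pos_part (in_supp_dist lam_dist) !ffunE.
by rewrite subr_gt0; apply: le_lt_trans.
Qed.

Lemma cost_minP :
  (forall mu, in_Lambda W mu -> cost c lam <= cost c mu) <->
  ~ exists alpha, descent_dir c lam alpha.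
Proof.
split=> [lam_min [alpha /descent_dir_improves [mu /lam_min]]|no_dir mu mu_in].
  by rewrite leNgt => /negP.
rewrite leNgt; apply/negP => mu_lt; apply: no_dir.
by exists (lam - mu); apply: improvement_descent_dir.
Qed.

End Optimality.

Lemma U_plus_descent_dir (lam : FT) :
  (exists U, @U_plus R m n U /\ U \subset supp lam) <->
  exists alpha, descent_dir log2_rank lam alpha.
Proof.
split=> [[_ [[alpha [adm ->]] sub]]|[alpha [mix0 _ cost_gt0 sub]]].
  by exists alpha; have [mix0 cost_gt0] := adm; split=> //; exact: admissible_sum0.
by exists (supp (pos_part alpha)); split=> //; exists alpha.
Qed.

Lemma U_minus_descent_dir (lam : FT) :
  (exists U, @U_minus R m n U /\ U \subset supp lam) <->
  exists alpha, descent_dir (fun D => - log2_rank D) lam alpha.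
Proof.
split=> [[_ [[alpha [adm ->]] sub]]|[alpha [mix0 _ cost_gt0 sub]]].
  exists (- alpha); have [mix0 cost_gt0] := adm; split.
  - by rewrite raddfN /= [mixture alpha]mix0 oppr0.
  - under eq_bigr do rewrite ffunE.
    by rewrite sumrN (admissible_sum0 adm) oppr0.
  - by rewrite raddfN /= cost_oppc opprK.
  - by rewrite -supp_neg_part.
exists (supp (neg_part (- alpha))); split; last by rewrite supp_neg_part opprK.
exists (- alpha); split=> //; split.
  by change (mixture (- alpha) = 0); rewrite raddfN /= mix0 oppr0.
by change (0 < cost log2_rank (- alpha)); rewrite raddfN /= -cost_oppc.
Qed.

End Mixtures.

Theorem proposition2 (R : realType) (m n : nat) (W : 'M[R]_(m, n))
  (lam : {ffun {ffun 'I_m -> 'I_n} -> R}) :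
  is_channel W -> in_Lambda W lam ->
  (C11 lam = C11_lower W <->
     ~ (exists U : {set {ffun 'I_m -> 'I_n}}, @U_plus R m n U /\ U \subset supp lam)) /\
  (C11 lam = C11_upper W <->
     ~ (exists U : {set {ffun 'I_m -> 'I_n}}, @U_minus R m n U /\ U \subset supp lam)).
Proof.
move=> _ lam_in; pose B := \sum_(D : {ffun 'I_m -> 'I_n}) `|log2_rank R D|.
have lam_val : C11_values W (C11 lam) by exists lam.
have has_lb : has_lbound (C11_values W).
  by exists (- B) => x /C11_values_norm_le; rewrite ler_norml => /andP[].
have has_ub : has_ubound (C11_values W).
  by exists B => x /C11_values_norm_le; rewrite ler_norml => /andP[].
split.
- rewrite inf_attainedP // U_plus_descent_dir -(cost_minP _ lam_in).
  split=> [lb mu mu_in|lam_min _ [mu [mu_in ->]]]; last exact: lam_min.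
  by apply: lb; exists mu.
- rewrite sup_attainedP // U_minus_descent_dir -(cost_minP _ lam_in).
  split=> [ub mu mu_in|lam_max _ [mu [mu_in ->]]].
    by rewrite !cost_oppc lerN2; apply: ub; exists mu.
  by have := lam_max mu mu_in; rewrite !cost_oppc lerN2.
Qed.
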